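(* Let $G$ be a cop-win graph of corner rank $\alpha\ge2$. No vertex of corner rank $\alpha-1$ is adjacent to every vertex of corner rank $\alpha-1$.
   Context: All graphs are finite, nonempty, and reflexive (every vertex has a loop, so each vertex is adjacent to itself). $N[v]$ is the closed neighborhood of $v$ (including $v$). For distinct $v,w$, $w$ strictly corners $v$ if $N[v]\subsetneq N[w]$; $v$ is then a strict corner. Corner ranking: set $G^{(1)}=G$, $k=1$. If $G^{(k)}$ is a clique, give all its vertices rank $k$ and stop. Else if $G^{(k)}$ has no strict corners, give all its vertices rank $\infty$ and stop. Else give every strict corner of $G^{(k)}$ rank $k$, delete them to get $G^{(k+1)}$ (induced subgraph), increase $k$ and repeat. The corner rank of $G$ is the largest rank of a vertex; cop-win graphs are exactly those of finite corner rank. *)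

(* A finite reflexive graph is a finType T (nonempty) with a
   reflexive symmetric adjacency relation e : rel T. *)
From mathcomp Require Import all_boot.
Set Implicit Arguments. Unset Strict Implicit. Unset Printing Implicit Defensive.

Section CornerRank.
Variables (T : finType) (e : rel T).

Definition nbhd (S : {set T}) (v : T) : {set T} := [set w in S | e v w].

Definition strict_corner (S : {set T}) (v : T) : bool :=
  (v \in S) && [exists w in S, (w != v) && (nbhd S v \proper nbhd S w)].

Definition strict_corners (S : {set T}) : {set T} :=
  [set v in S | strict_corner S v].

Definition is_clique (S : {set T}) : bool :=
  [forall u in S, forall v in S, e u v].

(* stage k = vertex set of G^(k+1): G^(1) = G, G^(k+1) = G^(k) minus its
   strict corners.  Once the procedure stops (clique, or no strict corners)
   the sequence becomes constant, as no strict corners are deleted. *)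
Fixpoint stage (k : nat) : {set T} :=
  if k is k'.+1 then stage k' :\: strict_corners (stage k') else [set: T].

(* Gk k = G^(k) for k >= 1 *)
Definition Gk (k : nat) : {set T} := stage k.-1.

Definition has_rank (v : T) (k : nat) : Prop :=
  [/\ 1 <= k, v \in Gk k,
      (forall j, 1 <= j < k -> ~~ is_clique (Gk j)) &
      (is_clique (Gk k) \/ strict_corner (Gk k) v)].

Definition corner_rank_eq (alpha : nat) : Prop :=
  [/\ forall v, exists k, has_rank v k,
      exists v, has_rank v alpha &
      forall v k, has_rank v k -> k <= alpha].

(* cop-win (equivalently, by the standing context, finite corner rank) *)
Definition cop_win : Prop := forall v, exists k, has_rank v k.

End CornerRank.

(* Let S = G^(alpha-1) and K = G^(alpha), the set of non-corners of S.  K is a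
   clique: otherwise a vertex of K whose neighbourhood in K is largest is not a
   strict corner of K, and it would have no finite rank.  Suppose some corner of
   S is adjacent to all corners of S, and pick such a corner u whose neighbourhood
   in S is largest.  A vertex w strictly cornering u is adjacent to all corners
   too, so by maximality w is not a corner: w lies in K and is adjacent to all of
   S.  Every other y in K has N_S[y] contained in N_S[w] and is not a corner, so
   N_S[y] = S as well; hence u is adjacent to all of K, and N_S[u] = S = N_S[w],
   contradicting the strictness of the cornering. *)
From mathcomp Require Import all_boot.
From mathcomp Require Import zify.

Section CornerRanking.
Set Implicit Arguments.
Unset Strict Implicit.
Variables (T : finType) (e : rel T).
Implicit Types (S : {set T}) (u v w y : T) (j k : nat).

Lemma nbhd_sub S v : nbhd e S v \subset S.
Proof. by apply/subsetP => y; rewrite inE => /andP[]. Qed.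

Lemma is_cliqueP S : reflect {in S &, forall y z, e y z} (is_clique e S).
Proof.
apply: (iffP forallP) => [cl y z yS zS | cl y].
  by move/implyP: (cl y) => /(_ yS) /forallP /(_ z) /implyP; apply.
by apply/implyP => yS; apply/forallP => z; apply/implyP; apply: cl.
Qed.

Lemma exists_non_strict_corner S v :
  v \in S -> exists2 x, x \in S & ~~ strict_corner e S x.
Proof.
move=> vS; case: (arg_maxnP (fun y => #|nbhd e S y|) vS) => x xS xmax.
exists x => //; apply/negP => /andP[_ /existsP[w /andP[wS /andP[_ ltxw]]]].
by have := proper_card ltxw; have := xmax w wS; lia.
Qed.

Lemma non_strict_corner_nbhd_full S y w :
  y \in S -> ~~ strict_corner e S y -> w \in S -> w != y ->
  nbhd e S w = S -> nbhd e S y = S.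
Proof.
move=> yS yNC wS wy nwS; apply/eqP; apply: contraNT yNC => nyS.
rewrite /strict_corner yS; apply/existsP; exists w.
by rewrite wS wy nwS properEneq nyS nbhd_sub.
Qed.

Lemma stage_subset m n : m <= n -> stage e n \subset stage e m.
Proof.
move=> /subnK <-; elim: (n - m) => [|d IH] //=.
exact: subset_trans (subsetDl _ _) IH.
Qed.

Lemma GkS k : 0 < k -> Gk e k.+1 = Gk e k :\: strict_corners e (Gk e k).
Proof. by case: k. Qed.

Lemma has_rank_notin v k m :
  has_rank e v k -> ~~ is_clique e (Gk e k) -> k < m -> v \notin Gk e m.
Proof.
case=> k1 _ _ [->//|vC] _ km; apply/negP => vm.
have : v \in Gk e k.+1 by apply: subsetP vm; apply: stage_subset; lia.
by rewrite GkS // !inE vC andbT andNb.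
Qed.

Lemma has_rankE v k :
  0 < k -> (forall j, 0 < j <= k -> ~~ is_clique e (Gk e j)) ->
  has_rank e v k <-> strict_corner e (Gk e k) v.
Proof.
move=> k1 ncl; split=> [[_ _ _ [cl|//]] | vC].
  by have := ncl k; rewrite cl k1 leqnn => /(_ isT).
split=> //; first by case/andP: vC.
  by move=> j /andP[j1 jk]; apply: ncl; rewrite j1 ltnW.
by right.
Qed.

Section CornerRank.
Variable alpha : nat.
Hypothesis hrank : corner_rank_eq e alpha.

Lemma corner_rank_non_clique j : 0 < j < alpha -> ~~ is_clique e (Gk e j).
Proof. by case: hrank => _ [v [_ _ ncl _]] _; apply: ncl. Qed.

Lemma corner_rank_last_clique : is_clique e (Gk e alpha).
Proof.
case: hrank => rk [v [_ vG _ _]] rk_le.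
apply/negPn/negP => ncl.
have [x xG xNC] := exists_non_strict_corner vG.
have [k xk] := rk x; have := rk_le _ _ xk.
rewrite leq_eqVlt => /orP[/eqP kE | klt].
  by subst k; case: xk => _ _ _ [cl | xC]; [rewrite cl in ncl | rewrite xC in xNC].
have k1 : 0 < k by case: xk.
have nclk : ~~ is_clique e (Gk e k) by apply: corner_rank_non_clique; rewrite k1.
by case/negP: (has_rank_notin xk nclk klt).
Qed.

End CornerRank.

Section CornersOfS.
Hypothesis e_sym : symmetric e.
Variable S : {set T}.
Hypothesis non_corners_clique : is_clique e (S :\: strict_corners e S).

Definition adj_all_corners u := [forall c, strict_corner e S c ==> e u c].

Lemma adj_all_cornersP u :
  reflect (forall c, strict_corner e S c -> e u c) (adj_all_corners u).
Proof. by apply: (iffP forallP) => h c; [apply/implyP | apply/implyP]; apply: h. Qed.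

Lemma adj_all_corners_nbhd u w :
  nbhd e S u \subset nbhd e S w -> adj_all_corners u -> adj_all_corners w.
Proof.
move=> sub_uw /adj_all_cornersP uC; apply/adj_all_cornersP => c cC.
have : c \in nbhd e S u by rewrite inE uC // andbT; case/andP: cC.
by move/(subsetP sub_uw); rewrite inE => /andP[].
Qed.

Lemma non_corner_not_strictly_cornering u w :
  u \in S -> adj_all_corners u -> w \in S -> ~~ strict_corner e S w ->
  ~~ (nbhd e S u \proper nbhd e S w).
Proof.
move=> uS uC wS wNC; apply/negP => ltuw.
have /adj_all_cornersP wC := adj_all_corners_nbhd (proper_sub ltuw) uC.
move/adj_all_cornersP: uC => uC.
have inK y : y \in S -> ~~ strict_corner e S y -> y \in S :\: strict_corners e S.
  by move=> yS yNC; rewrite !inE yS andbT negb_and yNC.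
have nwS : nbhd e S w = S.
  apply/setP => y; rewrite inE; case yS: (y \in S) => //=.
  have [/wC //|yNC] := boolP (strict_corner e S y).
  by apply: (is_cliqueP _ non_corners_clique); apply: inK.
have nuS : nbhd e S u = S.
  apply/setP => y; rewrite inE; case yS: (y \in S) => //=.
  have [/uC //|yNC] := boolP (strict_corner e S y).
  have nyS : nbhd e S y = S.
    have [<- //|wy] := eqVneq w y.
    exact: non_strict_corner_nbhd_full yS yNC wS wy nwS.
  have : u \in nbhd e S y by rewrite nyS.
  by rewrite inE e_sym => /andP[].
by move: ltuw; rewrite nuS nwS properxx.
Qed.

Lemma no_corner_adj_all_corners u :
  strict_corner e S u -> ~~ adj_all_corners u.
Proof.
move=> uC; apply/negP => uall.
pose U := [set y | strict_corner e S y & adj_all_corners y].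
have uU : u \in U by rewrite inE uC.
case: (arg_maxnP (fun y => #|nbhd e S y|) uU) => {uC uall}x xU xmax.
have : x \in U := xU.
rewrite inE => /andP[/andP[xS /existsP[w /andP[wS /andP[_ ltxw]]]] xall].
have [wC | wNC] := boolP (strict_corner e S w).
  have wU : w \in U by rewrite inE wC (adj_all_corners_nbhd (proper_sub ltxw)).
  by have := xmax w wU; have := proper_card ltxw; lia.
by move: ltxw; apply/negP; exact: non_corner_not_strictly_cornering xS xall wS wNC.
Qed.

End CornersOfS.

End CornerRanking.

Theorem lemma3p18 (T : finType) (e : rel T) (x0 : T)
    (e_refl : reflexive e) (e_sym : symmetric e)
    (alpha : nat) (hcw : cop_win e) (hrank : corner_rank_eq e alpha)
    (halpha : 2 <= alpha) :
  ~ (exists u, has_rank e u alpha.-1 /\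
       forall w, has_rank e w alpha.-1 -> e u w).
Proof.
move=> [u [u_rank u_adj]].
have a1 : 0 < alpha.-1 by lia.
have rankE v : has_rank e v alpha.-1 <-> strict_corner e (Gk e alpha.-1) v.
  by apply: has_rankE => // j ?; apply: (corner_rank_non_clique hrank); lia.
have Kcl : is_clique e (Gk e alpha.-1 :\: strict_corners e (Gk e alpha.-1)).
  by rewrite -GkS // prednK ?(corner_rank_last_clique hrank) //; lia.
have /negP := no_corner_adj_all_corners e_sym Kcl (proj1 (rankE u) u_rank).
by apply; apply/adj_all_cornersP => c /rankE; apply: u_adj.
Qed.
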